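(* There are deterministic distributed dynamic data structures for $4$-cycle listing and for $5$-cycle listing which handle edge insertions and deletions in $O(1)$ amortized rounds.
   Context: Highly dynamic network model: a synchronous network on a fixed set $V$ of $n$ nodes with unique identifiers starts as the empty graph; at the beginning of round $i$ the graph is $G_i=(V,E_i)$, obtained from the previous graph by an adversary inserting and/or deleting an arbitrary (unbounded) set of edges. At the start of each round every node is notified only of the insertions/deletions of edges incident to it; then each node may send a message of $O(\log n)$ bits to each of its current neighbors. A distributed dynamic data structure consists of a local part $DS_v$ at each node $v$; at the end of every round, $DS_v$ may be queried and must answer immediately, without any further communication, with $\texttt{true}$, $\texttt{false}$ or $\texttt{inconsistent}$. The amortized round complexity is at most $c$ if for every round $i$, the number of rounds up to round $i$ in which at least one node $v$ has $DS_v$ in an inconsistent state, divided by the total number of topology changes that occurred up to round $i$, is at most $c$. $k$-cycle listing ($k\in\{4,5\}$): in round $i$, $DS_v$ at each node $v$ responds to queries of the form $H=\{v,u_1,\ldots,u_{k-1}\}$ (a cyclically ordered set of $k$ nodes containing $v$) with $\texttt{true}$, $\texttt{false}$ or $\texttt{inconsistent}$, such that if all nodes of $H$ are queried with $H$, then either at least one node responds $\texttt{inconsistent}$, or at least one node responds $\texttt{true}$ if and only if $H$ is a $k$-cycle in $G_{i-1}$. *)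

From mathcomp Require Import all_boot.
Set Implicit Arguments. Unset Strict Implicit. Unset Printing Implicit Defensive.

Inductive answer := Ans_true | Ans_false | Ans_incons.

Definition is_incons (a : answer) : bool := if a is Ans_incons then true else false.
Definition is_yes (a : answer) : bool := if a is Ans_true then true else false.

(* Nodes are 'I_n (unique identifiers; n is known to the
   nodes).  The local part DS_v is the (unbounded) local state of type st n.
   In each round a node v
   - is notified of the changes of its incident edges: the finite function
     maps u to [Some b] if the edge vu changed in this round and is now
     present (b = true, insertion) / absent (b = false, deletion), and to
     [None] otherwise  (st_notify);
   - sends a (possibly empty) message st_send ... u to every node u; only
     messages to current neighbours are delivered;
   - updates its state with the messages received from its current
     neighbours, indexed by sender (st_recv);
   - must then answer any query immediately from its local state, without
     communication (st_query). *)
Record dyn_alg : Type := DynAlg {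
  st : nat -> Type;
  st_init : forall n, 'I_n -> st n;
  st_notify : forall n, 'I_n -> st n -> {ffun 'I_n -> option bool} -> st n;
  st_send : forall n, 'I_n -> st n -> 'I_n -> option nat;
  st_recv : forall n, 'I_n -> st n -> ('I_n -> option nat) -> st n;
  st_query : forall n, 'I_n -> st n -> seq 'I_n -> answer }.

(* Messages of O(log n) bits: message values are < (n+2)^B for a constant B. *)
Definition small_messages (A : dyn_alg) : Prop :=
  exists B : nat, forall n (v : 'I_n) (s : st A n) (u : 'I_n) (m : nat),
    @st_send A n v s u = Some m -> m < (n.+2) ^ B.

(* A dynamic graph sequence on V = 'I_n: G i is the (simple, undirected)
   graph G_i of round i; G_0 is the empty graph; between consecutive rounds
   the adversary may change an arbitrary set of edges. *)
Definition dyn_graph_seq n (G : nat -> rel 'I_n) : Prop :=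
  (forall i u v, G i u v = G i v u) /\
  (forall i v, ~~ G i v v) /\
  (forall u v, ~~ G 0 u v).

Definition changes n (G : nat -> rel 'I_n) (i : nat) (v : 'I_n)
  : {ffun 'I_n -> option bool} :=
  [ffun u => if G i v u != G i.-1 v u then Some (G i v u) else None].

(* Local states of all nodes at the end of round i (round 0 = initial). *)
Fixpoint run (A : dyn_alg) n (G : nat -> rel 'I_n) (i : nat) : forall v : 'I_n, st A n :=
  match i with
  | 0 => @st_init A n
  | j.+1 =>
      let s := run A G j in
      let s' := fun v => @st_notify A n v (s v) (changes G j.+1 v) in
      fun v => @st_recv A n v (s' v)
                 (fun u => if G j.+1 u v then @st_send A n u (s' u) v else None)
  end.

Definition resp (A : dyn_alg) n (G : nat -> rel 'I_n) (i : nat) (v : 'I_n)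
  (H : seq 'I_n) : answer := @st_query A n v (run A G i v) H.

(* A query to v: a cyclically ordered set of k distinct nodes containing v. *)
Definition valid_query k n (v : 'I_n) (H : seq 'I_n) : bool :=
  [&& size H == k, uniq H & v \in H].

Definition is_kcycle k n (g : rel 'I_n) (H : seq 'I_n) : Prop :=
  [/\ size H = k, uniq H & cycle g H].

(* k-cycle listing correctness in round i >= 1 (answers w.r.t. G_{i-1}). *)
Definition listing_correct (k : nat) (A : dyn_alg) : Prop :=
  forall n (G : nat -> rel 'I_n), dyn_graph_seq G ->
  forall (i : nat) (H : seq 'I_n), size H = k -> uniq H ->
    (exists2 v, v \in H & is_incons (resp A G i.+1 v H)) \/
    ((exists2 v, v \in H & is_yes (resp A G i.+1 v H)) <-> is_kcycle k (G i) H).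

Definition round_inconsistent (A : dyn_alg) k n (G : nat -> rel 'I_n) (i : nat) : bool :=
  [exists v : 'I_n, [exists H : k.-tuple 'I_n,
     valid_query k v H && is_incons (resp A G i v H)]].

Definition nchanges n (G : nat -> rel 'I_n) (i : nat) : nat :=
  #|[set p : 'I_n * 'I_n | (p.1 < p.2)%N && (G i p.1 p.2 != G i.-1 p.1 p.2)]|.

Definition amortized_le (A : dyn_alg) k (c : nat) : Prop :=
  forall n (G : nat -> rel 'I_n), dyn_graph_seq G -> forall i : nat,
    \sum_(1 <= j < i.+1) round_inconsistent A k G j
      <= c * \sum_(1 <= j < i.+1) nchanges G j.

Definition kcycle_listing_O1 (k : nat) : Prop :=
  exists A : dyn_alg,
    [/\ small_messages A, listing_correct k A & exists c : nat, amortized_le A k c].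

From HB Require Import structures.
From mathcomp Require Import all_boot zify.
Set Implicit Arguments. Unset Strict Implicit. Unset Printing Implicit Defensive.

(* Every node y keeps, for each neighbour x, a FIFO queue of the changes of
   its own incident edges, and announces one queued change to x per round;
   thus y eventually knows the neighbourhood of each neighbour z, and records
   when it learnt each edge zw.  Besides, y forwards to x, one operation per
   round, the 2-paths y-z-w that it learnt no earlier than the insertion of
   xy, and x mirrors them.  A node answers inconsistent while any of this
   work is pending.

   Listing: if all nodes of a 4- or 5-cycle are consistent, let ab be its
   most recently inserted edge.  The cycle neighbours of a and b learnt ab
   after their own cycle edges were inserted, so they forwarded it, and the
   node opposite to ab sees every edge of the cycle.

   Amortization: the potential max_(y,x) (|queue y->x| + forwarding debt of
   y towards x + 2 sum_z |queue z->y|) grows by at most 8 per topology change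
   and, while positive, decreases by one in every round without change; a
   round without change that ends inconsistent has positive potential.
   Hence there are at most 9 inconsistent rounds per topology change. *)

Lemma card_set_sum (T : finType) (P : pred T) : #|[set z | P z]| = \sum_z (P z : nat).
Proof. by rewrite -sum1_card big_mkcond /=; apply: eq_bigr => z _; rewrite inE; case: (P z). Qed.

Lemma sum_card_rel (T : finType) (P : rel T) :
  \sum_z #|[set u | P z u]| = #|[set p : T * T | P p.1 p.2]|.
Proof.
rewrite card_set_sum (eq_bigr (fun z => \sum_u (P z u : nat))) ?pair_big // => z _.
exact: card_set_sum.
Qed.

Lemma rot_to_max_edge (T : finType) (f : T -> T -> nat) (H : seq T) : uniq H -> 1 < size H ->
  exists i a b s, rot i H = [:: a, b & s] /\ cycle (fun p q => f p q <= f a b) H.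
Proof.
case: H => [|x0 H0] // uH sH; set H := x0 :: H0 in uH sH *.
have [a aH amax] := arg_maxnP (fun x => f x (next H x)) (mem_head x0 H0).
have [i [|b s] rotE] := rot_to aH; first by move: sH; rewrite -(size_rot i) rotE.
exists i, a, b, s; split => //.
have nextE : next H a = b by rewrite -(next_rot i uH) rotE /= eqxx.
apply: (sub_in_cycle (P := mem H)) (cycle_next uH); last by apply/allP.
by move=> x y xH _ /eqP <-; rewrite -nextE; apply: amax.
Qed.

Section QueuedUpdates.
Variable T : finType.

(* A queue entry (w, b) records that the link to w was inserted (b = true) or
   deleted; the head of a queue is its oldest entry. *)
Fixpoint last_update (q : seq (T * bool)) (w : T) : option bool :=
  if q is e :: q' then
    if last_update q' w is Some b then Some b
    else if e.1 == w then Some e.2 else None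
  else None.

Definition view_upd (a : option (T * bool)) (R : {set T}) : {set T} :=
  if a is Some (w, b) then (if b then w |: R else R :\ w) else R.

Definition time_upd (a : option (T * bool)) (t : nat) (L : T -> nat) : T -> nat :=
  fun w' => if a is Some (w, _) then (if w' == w then t else L w') else L w'.

(* q is the queue of updates of a neighbourhood g, with insertion times f,
   towards a receiver whose link was inserted at time li and which holds the
   view R, learnt at times L: queued updates are correct, the view is sound
   where nothing is queued, and it is complete, with late enough times, for
   the neighbours inserted after the link. *)
Definition queue_inv (g : pred T) (f : T -> nat) (li : nat) (q : seq (T * bool))
    (R : {set T}) (L : T -> nat) : Prop :=
  forall w, [/\ forall b, last_update q w = Some b -> b = g w,
    last_update q w = None -> w \in R -> g w &
    g w -> li <= f w -> last_update q w = None -> (w \in R) && (f w <= L w)].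

Lemma last_update_cat q r w :
  last_update (q ++ r) w = if last_update r w is Some b then Some b else last_update q w.
Proof. by elim: q => [|e q IH] /=; rewrite ?IH; case: (last_update r w). Qed.

Lemma last_update_pmap (ch : T -> option bool) w (s : seq T) : uniq s ->
  last_update (pmap (fun u => omap (pair u) (ch u)) s) w = if w \in s then ch w else None.
Proof.
elim: s => [|u s IHs] //= /andP [us /IHs]; rewrite in_cons.
case: (eqVneq w u) => [->|nwu] /= IH.
  by rewrite (negbTE us) in IH; case: (ch u) => [b|] /=; rewrite IH ?eqxx.
by case: (ch u) => [b|] /=; rewrite IH //; case: (w \in s) => //; case: (ch w) => //=;
  rewrite eq_sym (negbTE nwu).
Qed.

Lemma queue_inv_pop g f li q R L t : queue_inv g f li q R L -> (forall w, f w <= t) ->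
  queue_inv g f li (behead q) (view_upd (ohead q) R) (time_upd (ohead q) t L).
Proof.
case: q => [|[w0 b0] q] inv Ht w /=; first exact: inv.
have [Hc Ha Hb] := inv w.
have head_sound : last_update q w = None -> w = w0 -> b0 = g w.
  by move=> E Ew; apply: Hc; rewrite /= E Ew eqxx.
have tail_none : last_update q w = None -> w != w0 -> last_update ((w0, b0) :: q) w = None.
  by move=> E nw; rewrite /= E eq_sym (negbTE nw).
have other_view : w != w0 -> (w \in if b0 then w0 |: R else R :\ w0) = (w \in R).
  by move=> nw; case: ifP; rewrite !inE (negbTE nw).
split.
- by move=> b E; apply: Hc; rewrite /= E.
- move=> E; case: (eqVneq w w0) => [Ew|nw].
    by rewrite (head_sound E Ew) Ew; case: (g w0); rewrite ?inE ?eqxx.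
  by rewrite other_view //; apply: Ha; apply: tail_none.
- move=> gw lw E; case: (eqVneq w w0) => [Ew|nw].
    by rewrite -(head_sound E Ew) in gw; rewrite /time_upd Ew gw !inE !eqxx /= Ht.
  by rewrite /time_upd other_view //; apply: Hb => //; apply: tail_none.
Qed.

End QueuedUpdates.

Section Algorithm.
Variable n : nat.
Local Notation V := 'I_n.

Inductive op := Idle | Purge of V | Add of V * V | Remove of V * V.

Definition op_code (o : op) : option (V + (V * V + V * V)) :=
  match o with
  | Idle => None
  | Purge z => Some (inl z)
  | Add p => Some (inr (inl p))
  | Remove p => Some (inr (inr p))
  end.

Definition op_decode (c : option (V + (V * V + V * V))) : op :=
  match c with
  | None => Idle
  | Some (inl z) => Purge z
  | Some (inr (inl p)) => Add p
  | Some (inr (inr p)) => Remove p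
  end.

Lemma op_codeK : cancel op_code op_decode. Proof. by case. Qed.

HB.instance Definition _ := Finite.copy op (can_type op_codeK).

Definition message := (option (V * bool) * op)%type.

(* Local state of node y: [nbrs_of z] is y's view of the neighbourhood of z,
   learnt at rounds [learnt z]; [sent x] is the set of 2-paths (z, w) that y
   has forwarded to x, of which x keeps the copy [mirror y]; [purge x] holds
   deleted neighbours z whose 2-paths (z, _) are still to be withdrawn at x;
   [ins_round x] is the round of the last insertion of the edge xy. *)
Record node_state := NodeState {
  clock : nat;
  changed : bool;
  nbrs : {set V};
  ins_round : V -> nat;
  outq : V -> seq (V * bool);
  nbrs_of : V -> {set V};
  learnt : V -> V -> nat;
  sent : V -> {set V * V};
  purge : V -> {set V};
  mirror : V -> {set V * V} }.

Definition encode (m : message) : nat := enum_rank m.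
Definition decode (k : nat) : option message :=
  omap (fun i : 'I_#|{: message}| => enum_val i) (insub k).

Lemma encodeK m : decode (encode m) = Some m.
Proof. by rewrite /decode /encode valK /= enum_rankK. Qed.

Lemma encode_small m : encode m < n.+2 ^ 5.
Proof.
have card_op : #|{: op}| <= 1 + (n + (n * n + n * n)).
  apply: leq_trans (leq_card op_code (can_inj op_codeK)) _.
  by rewrite card_option !card_sum !card_prod card_ord.
apply: (leq_trans (ltn_ord (enum_rank m))); rewrite card_prod card_option.
rewrite card_prod card_bool card_ord.
apply: leq_trans (leq_mul (leqnn _) card_op) _; rewrite !expnS expn0; nia.
Qed.

Definition due (s : node_state) (x : V) : {set V * V} :=
  if x \in nbrs s then
    [set p | [&& p.1 \in nbrs s, p.2 \in nbrs_of s p.1 & ins_round s x <= learnt s p.1 p.2]]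
  else set0.

Definition next_op (s : node_state) (x : V) : op :=
  if [pick z in purge s x] is Some z then Purge z
  else if [pick p in due s x :\: sent s x] is Some p then Add p
  else if [pick p in sent s x :\: due s x] is Some p then Remove p
  else Idle.

Definition apply_op (o : op) (T : {set V * V}) : {set V * V} :=
  match o with
  | Purge z => [set p in T | p.1 != z]
  | Add p => p |: T
  | Remove p => T :\ p
  | Idle => T
  end.

Definition purge_op (o : op) (P : {set V}) : {set V} :=
  if o is Purge z then P :\ z else P.

Definition updates (ch : {ffun V -> option bool}) : seq (V * bool) :=
  pmap (fun u => omap (pair u) (ch u)) (enum V).

Definition notify (s : node_state) (ch : {ffun V -> option bool}) : node_state :=
  let nbrs' := [set u | if ch u is Some b then b else u \in nbrs s] in
  NodeState (clock s).+1 [exists u, ch u != None] nbrs'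
   (fun u => if ch u != None then (clock s).+1 else ins_round s u)
   (fun u => (if ch u != None then [::] else outq s u) ++
             (if u \in nbrs' then updates ch else [::]))
   (fun u => if ch u != None then set0 else nbrs_of s u)
   (fun u => if ch u != None then (fun _ => 0) else learnt s u)
   (fun u => if ch u != None then set0 else sent s u)
   (fun u => if ch u != None then set0
             else if u \in nbrs' then purge s u :|: [set u | ch u == Some false]
             else purge s u)
   (fun u => if ch u != None then set0 else mirror s u).

Definition send (s : node_state) (u : V) : option nat :=
  Some (encode (ohead (outq s u), next_op s u)).

Definition announcement (m : option nat) : option (V * bool) :=
  if obind decode m is Some (Some a, _) then Some a else None.

Definition op_of (m : option nat) : op :=
  if obind decode m is Some (_, o) then o else Idle.

Definition recv (s : node_state) (m : V -> option nat) : node_state :=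
  NodeState (clock s) (changed s) (nbrs s) (ins_round s)
   (fun x => if x \in nbrs s then behead (outq s x) else outq s x)
   (fun z => view_upd (announcement (m z)) (nbrs_of s z))
   (fun z => time_upd (announcement (m z)) (clock s) (learnt s z))
   (fun x => if x \in nbrs s then apply_op (next_op s x) (sent s x) else sent s x)
   (fun x => if x \in nbrs s then purge_op (next_op s x) (purge s x) else purge s x)
   (fun z => apply_op (op_of (m z)) (mirror s z)).

Definition inconsistent (s : node_state) : bool :=
  changed s || [exists x in nbrs s,
    [|| outq s x != [::], purge s x != set0 | due s x != sent s x]].

Definition same_edge (p q a b : V) : bool :=
  ((p == a) && (q == b)) || ((p == b) && (q == a)).

Definition cert (v : V) (s : node_state) (H : seq V) (p q : V) : bool :=
  ((p == v) && (q \in nbrs s)) || ((q == v) && (p \in nbrs s)) ||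
  [exists y, exists z, exists w, [&& y \in nbrs s, y \in H, z \in H,
     (z, w) \in mirror s y & same_edge p q y z || same_edge p q z w]].

Definition query (v : V) (s : node_state) (H : seq V) : answer :=
  if inconsistent s then Ans_incons
  else if cycle (cert v s H) H then Ans_true else Ans_false.

Definition init_state : node_state :=
  NodeState 0 false set0 (fun _ => 0) (fun _ => [::]) (fun _ => set0)
    (fun _ _ => 0) (fun _ => set0) (fun _ => set0) (fun _ => set0).

End Algorithm.

Arguments Idle {n}.

Definition Alg : dyn_alg :=
  @DynAlg node_state (fun n _ => @init_state n) (fun n _ s ch => notify s ch)
    (fun n _ s u => send s u) (fun n _ s m => recv s m) (fun n v s H => query v s H).

Lemma small_messages_Alg : small_messages Alg.
Proof. by exists 5 => n v s u m /= [<-]; exact: encode_small. Qed.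

Lemma last_update_updates n (ch : {ffun 'I_n -> option bool}) w :
  last_update (updates ch) w = ch w.
Proof. by rewrite /updates last_update_pmap ?enum_uniq ?mem_enum. Qed.

Lemma next_op_spec n (s : node_state n) x :
  match next_op s x return Prop with
  | Purge z => z \in purge s x
  | Add p => purge s x = set0 /\ p \in due s x :\: sent s x
  | Remove p => [/\ purge s x = set0, due s x :\: sent s x = set0 & p \in sent s x :\: due s x]
  | Idle => [/\ purge s x = set0, due s x :\: sent s x = set0 & sent s x :\: due s x = set0]
  end.
Proof.
have pick0 (T : finType) (A : {set T}) : (forall z, z \in A = false) -> A = set0.
  by move=> A0; apply/setP => z; rewrite inE A0.
rewrite /next_op; case: pickP => [z -> //|/pick0 eP].
case: pickP => [p Hp|/pick0 eD]; first by split.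
by case: pickP => [p Hp|/pick0 eT]; split.
Qed.

Lemma due_src n (s : node_state n) x p : p \in due s x -> p.1 \in nbrs s.
Proof. by rewrite /due; case: ifP; rewrite ?inE // => _ /and3P []. Qed.

Lemma in_due n (s : node_state n) x p : x \in nbrs s ->
  (p \in due s x) = [&& p.1 \in nbrs s, p.2 \in nbrs_of s p.1 & ins_round s x <= learnt s p.1 p.2].
Proof. by rewrite /due => ->; rewrite inE. Qed.

Lemma sent_src_next_op n (s : node_state n) x :
  (forall p, p \in sent s x -> (p.1 \in nbrs s) || (p.1 \in purge s x)) ->
  forall p, p \in apply_op (next_op s x) (sent s x) ->
    (p.1 \in nbrs s) || (p.1 \in purge_op (next_op s x) (purge s x)).
Proof.
move=> src p; have := next_op_spec s x; case: (next_op s x) => [|z|q|q] /=.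
- by move=> _; apply: src.
- move=> _; rewrite inE => /andP [hp nz]; case/orP: (src _ hp) => [-> //|hP].
  by rewrite !inE nz hP orbT.
- move=> [_]; rewrite inE => /andP [_ hq]; rewrite in_setU1 => /orP [/eqP ->|hp].
    by rewrite (due_src hq).
  exact: src.
- by move=> _; rewrite in_setD1 => /andP [_ hp]; apply: src.
Qed.

Lemma due_recv n (s : node_state n) (m : 'I_n -> option nat) x z w :
  ((z, w) \in due (recv s m) x) != ((z, w) \in due s x) ->
  exists b, announcement n (m z) = Some (w, b).
Proof.
rewrite /due /=; case: ifP => _; last by rewrite eqxx.
rewrite !inE /= /view_upd /time_upd.
case: (announcement n (m z)) => [[w0 b0]|]; last by rewrite eqxx.
case: (eqVneq w w0) => [->|nw]; first by exists b0.
by case: b0; rewrite ?inE (negbTE nw) eqxx.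
Qed.

Section ForwardingDebt.
Variable n : nat.
Local Notation V := 'I_n.

(* The 2-paths forwarded to x that x still mirrors once pending purges are
   done. *)
Definition live_sent (P : {set V}) (T : {set V * V}) := [set p in T | p.1 \notin P].

Definition debt (P : {set V}) (T D : {set V * V}) :=
  #|P| + #|D :\: live_sent P T| + #|live_sent P T :\: D|.

Definition fwd_debt (s : node_state n) x := debt (purge s x) (sent s x) (due s x).

Lemma live_sent0 T : live_sent set0 T = T.
Proof. by apply/setP => p; rewrite !inE andbT. Qed.

Lemma debt0 D : debt set0 set0 D = #|D|.
Proof.
rewrite /debt live_sent0 cards0 add0n setD0.
have -> : set0 :\: D = set0 by apply/setP => p; rewrite !inE andbF.
by rewrite cards0 addn0.
Qed.

Lemma debt_next_op (s : node_state n) x :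
  debt (purge_op (next_op s x) (purge s x)) (apply_op (next_op s x) (sent s x)) (due s x)
    + (0 < fwd_debt s x) <= fwd_debt s x.
Proof.
rewrite /fwd_debt; have := next_op_spec s x; case: (next_op s x) => [|z|p|p] /=.
- by case=> eP eD eT; rewrite /debt eP cards0 live_sent0 eD eT cards0.
- move=> zP; have live : live_sent (purge s x :\ z) [set p in sent s x | p.1 != z] =
      live_sent (purge s x) (sent s x).
    apply/setP => q; rewrite !inE; case: (eqVneq q.1 z) => [->|nq]; first by rewrite zP !andbF.
    by rewrite andbT.
  by rewrite /debt live (cardsD1 z (purge s x)) zP /= add1n !addSn addn1.
- move=> [eP hp]; rewrite /debt eP cards0 !live_sent0 !add0n.
  have -> : due s x :\: (p |: sent s x) = (due s x :\: sent s x) :\ p.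
    by apply/setP => q; rewrite !inE negb_or andbA [(q != p) && _]andbC.
  have -> : (p |: sent s x) :\: due s x = sent s x :\: due s x.
    apply/setP => q; rewrite !inE; case: (eqVneq q p) => [->|] //=.
    by move: hp; rewrite inE => /andP [_ ->].
  by rewrite (cardsD1 p (due s x :\: sent s x)) hp /= add1n !addSn addn1.
- move=> [eP eD hp]; rewrite /debt eP cards0 !live_sent0 !add0n eD cards0.
  have -> : due s x :\: (sent s x :\ p) = set0.
    apply/setP => q; rewrite !inE; apply/negbTE; rewrite negb_and negbK.
    case: (eqVneq q p) => [->|nq] /=; first by move: hp; rewrite inE => /andP [-> _].
    by move/setP: eD => /(_ q); rewrite !inE; case: (q \in sent s x); case: (q \in due s x).
  have -> : (sent s x :\ p) :\: due s x = (sent s x :\: due s x) :\ p.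
    by apply/setP => q; rewrite !inE; case: (q \in sent s x); case: (q \in due s x); case: (q == p).
  by rewrite (cardsD1 p (sent s x :\: due s x)) hp cards0 /= !add0n add1n addn1.
Qed.

Lemma debt_due P T D1 D2 : debt P T D1 <= debt P T D2 + #|D1 :\: D2| + #|D2 :\: D1|.
Proof.
have tri (A B C : {set V * V}) : #|A :\: C| <= #|A :\: B| + #|B :\: C|.
  apply: leq_trans (leq_card_setU _ _); apply: subset_leq_card; apply/subsetP => p.
  by rewrite in_setU !in_setD; case: (p \in A); case: (p \in B); case: (p \in C).
have := tri D1 D2 (live_sent P T); have := tri (live_sent P T) D2 D1; rewrite /debt; lia.
Qed.

(* Toggling the links to the nodes of Tog drops from the due set the 2-paths
   through them; those that were due go through deleted links (Del), which are
   purged. *)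
Lemma debt_restrict (P Del Tog : {set V}) (T D : {set V * V}) : Del \subset Tog ->
  {in D, forall p, p.1 \in Tog -> p.1 \in Del} ->
  debt (P :|: Del) T [set p in D | p.1 \notin Tog] <= debt P T D + #|Tog|.
Proof.
move=> /subsetP DelTog DelD.
have hP : #|P :|: Del| <= #|P| + #|Tog|.
  by apply: leq_trans (leq_card_setU _ _) _; rewrite leq_add2l subset_leq_card //; apply/subsetP.
have hD : #|[set p in D | p.1 \notin Tog] :\: live_sent (P :|: Del) T| <= #|D :\: live_sent P T|.
  apply: subset_leq_card; apply/subsetP => p; rewrite !inE.
  have : (p.1 \in Del) ==> (p.1 \in Tog) by apply/implyP/DelTog.
  by case: (p \in T); case: (p.1 \in P); case: (p \in D); case: (p.1 \in Tog); case: (p.1 \in Del).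
have hL : #|live_sent (P :|: Del) T :\: [set p in D | p.1 \notin Tog]| <= #|live_sent P T :\: D|.
  apply: subset_leq_card; apply/subsetP => p; rewrite !inE.
  have : (p \in D) ==> (p.1 \in Tog) ==> (p.1 \in Del).
    by apply/implyP => pD; apply/implyP; apply: DelD.
  by case: (p \in T); case: (p.1 \in P); case: (p \in D); case: (p.1 \in Tog); case: (p.1 \in Del).
by rewrite /debt; lia.
Qed.

Lemma fwd_debt_gt0 (s : node_state n) x :
  (purge s x != set0) || (due s x != sent s x) -> 0 < fwd_debt s x.
Proof.
rewrite /fwd_debt /debt; case: (eqVneq (purge s x) set0) => [eP|nP] /=; last first.
  by move=> _; rewrite -!addnA ltn_addr // card_gt0.
move=> nD; rewrite eP cards0 live_sent0 add0n.
case: (posnP #|due s x :\: sent s x|) => [d1|]; last by move=> h; rewrite ltn_addr.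
case: (posnP #|sent s x :\: due s x|) => [d2|]; last by move=> h; rewrite ltn_addl.
move/eqP: d1; move/eqP: d2; rewrite !cards_eq0 !setD_eq0 => s2 s1.
by move: nD; rewrite eqEsubset s1 s2.
Qed.

End ForwardingDebt.

Section Certificates.
Variables (n : nat) (v : 'I_n) (s : node_state n).

Lemma same_edge_refl (p q : 'I_n) : same_edge p q p q.
Proof. by rewrite /same_edge !eqxx. Qed.

Lemma same_edge_swap (p q : 'I_n) : same_edge p q q p.
Proof. by rewrite /same_edge !eqxx orbT. Qed.

Lemma cert_link H u p q : u \in nbrs s -> same_edge p q v u -> cert v s H p q.
Proof. by move=> uN /orP [] /andP [/eqP -> /eqP ->]; rewrite /cert eqxx uN ?orbT. Qed.

Lemma cert_mirror H y z w p q : y \in nbrs s -> y \in H -> z \in H ->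
  (z, w) \in mirror s y -> same_edge p q y z || same_edge p q z w -> cert v s H p q.
Proof.
move=> yN yH zH zw he; apply/orP; right.
by apply/existsP; exists y; apply/existsP; exists z; apply/existsP; exists w; apply/and5P.
Qed.

Lemma cert_eq_mem H H' : H =i H' -> cert v s H =2 cert v s H'.
Proof.
move=> eqH p q; rewrite /cert; congr orb.
by apply: eq_existsb => y; apply: eq_existsb => z; apply: eq_existsb => w; rewrite !eqH.
Qed.

End Certificates.

Section Run.
Variable n : nat.
Local Notation V := 'I_n.
Variable G : nat -> rel V.
Hypothesis G_sym : forall i u v, G i u v = G i v u.
Hypothesis G0 : forall u v, ~~ G 0 u v.

Fixpoint last_ins (j : nat) (y x : V) : nat :=
  if j is j'.+1 then (if G j y x && ~~ G j' y x then j else last_ins j' y x) else 0.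

(* [state j] is the state at the end of round j; [notified j] the state in
   round j+1 after the notification, and [msg j z y] the message from z to y
   in round j+1. *)
Definition state j : V -> node_state n := run Alg G j.
Definition notified j y : node_state n := notify (state j y) (changes G j.+1 y).
Definition msg j (z y : V) : option nat := if G j.+1 z y then send (notified j z) y else None.

Definition toggled j (y x : V) : bool := G j.+1 y x != G j y x.

Lemma changesE j y x : changes G j.+1 y x = if toggled j y x then Some (G j.+1 y x) else None.
Proof. by rewrite /changes ffunE. Qed.

Lemma changes_toggled j y x : (changes G j.+1 y x != None) = toggled j y x.
Proof. by rewrite changesE; case: (toggled j y x). Qed.

Lemma toggled_sym j y x : toggled j y x = toggled j x y.
Proof. by rewrite /toggled G_sym [G j y x]G_sym. Qed.

Lemma untoggled j y x : ~~ toggled j y x -> G j.+1 y x = G j y x.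
Proof. by rewrite negbK => /eqP. Qed.

Lemma last_ins_le j y x : last_ins j y x <= j.
Proof. by elim: j => //= j IH; case: ifP => // _; apply: leqW. Qed.

Lemma last_ins_sym j y x : last_ins j y x = last_ins j x y.
Proof. by elim: j => //= j ->; rewrite G_sym [G j y x]G_sym. Qed.

Lemma last_insS j y x :
  last_ins j.+1 y x = if G j.+1 y x && toggled j y x then j.+1 else last_ins j y x.
Proof. by rewrite /= /toggled; case: (G j.+1 y x); case: (G j y x). Qed.

Section Notified.
Variables (j : nat) (y : V).
Local Notation ch := (changes G j.+1 y).

Lemma nbrs_notified x :
  (x \in nbrs (notified j y)) = if toggled j y x then G j.+1 y x else x \in nbrs (state j y).
Proof. by rewrite /notified /= inE changesE; case: (toggled j y x). Qed.
Lemma clock_notified : clock (notified j y) = (clock (state j y)).+1. Proof. by []. Qed.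
Lemma changed_notified : changed (notified j y) = [exists u, toggled j y u].
Proof. by apply: eq_existsb => u; rewrite changes_toggled. Qed.
Lemma ins_round_notified x : ins_round (notified j y) x =
  if toggled j y x then (clock (state j y)).+1 else ins_round (state j y) x.
Proof. by rewrite /notified /= changes_toggled. Qed.
Lemma outq_notified x : outq (notified j y) x =
  (if toggled j y x then [::] else outq (state j y) x) ++
  (if x \in nbrs (notified j y) then updates ch else [::]).
Proof. by rewrite /notified /= changes_toggled. Qed.
Lemma nbrs_of_notified x :
  nbrs_of (notified j y) x = if toggled j y x then set0 else nbrs_of (state j y) x.
Proof. by rewrite /notified /= changes_toggled. Qed.
Lemma learnt_notified x :
  learnt (notified j y) x = if toggled j y x then (fun _ => 0) else learnt (state j y) x.
Proof. by rewrite /notified /= changes_toggled. Qed.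
Lemma sent_notified x :
  sent (notified j y) x = if toggled j y x then set0 else sent (state j y) x.
Proof. by rewrite /notified /= changes_toggled. Qed.
Lemma mirror_notified x :
  mirror (notified j y) x = if toggled j y x then set0 else mirror (state j y) x.
Proof. by rewrite /notified /= changes_toggled. Qed.
Lemma purge_notified x : purge (notified j y) x =
  if toggled j y x then set0
  else if x \in nbrs (notified j y) then purge (state j y) x :|: [set u | ch u == Some false]
  else purge (state j y) x.
Proof. by rewrite /notified /= changes_toggled. Qed.

Local Notation s := (notified j y).

Lemma nbrs_stateS : nbrs (state j.+1 y) = nbrs s. Proof. by []. Qed.
Lemma clock_stateS : clock (state j.+1 y) = clock s. Proof. by []. Qed.
Lemma changed_stateS : changed (state j.+1 y) = changed s. Proof. by []. Qed.
Lemma ins_round_stateS : ins_round (state j.+1 y) = ins_round s. Proof. by []. Qed.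
Lemma outq_stateS x :
  outq (state j.+1 y) x = if x \in nbrs s then behead (outq s x) else outq s x.
Proof. by []. Qed.
Lemma sent_stateS x : sent (state j.+1 y) x =
  if x \in nbrs s then apply_op (next_op s x) (sent s x) else sent s x.
Proof. by []. Qed.
Lemma purge_stateS x : purge (state j.+1 y) x =
  if x \in nbrs s then purge_op (next_op s x) (purge s x) else purge s x.
Proof. by []. Qed.
Lemma nbrs_of_stateS z :
  nbrs_of (state j.+1 y) z = view_upd (announcement n (msg j z y)) (nbrs_of s z).
Proof. by []. Qed.
Lemma learnt_stateS z :
  learnt (state j.+1 y) z = time_upd (announcement n (msg j z y)) (clock s) (learnt s z).
Proof. by []. Qed.
Lemma mirror_stateS z : mirror (state j.+1 y) z = apply_op (op_of n (msg j z y)) (mirror s z).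
Proof. by []. Qed.

End Notified.

Lemma announcement_msg j z y :
  announcement n (msg j z y) = if G j.+1 z y then ohead (outq (notified j z) y) else None.
Proof.
by rewrite /msg /announcement; case: (G j.+1 z y) => //=; rewrite encodeK; case: (ohead _).
Qed.

Lemma op_of_msg j z y :
  op_of n (msg j z y) = if G j.+1 z y then next_op (notified j z) y else Idle.
Proof. by rewrite /msg /op_of; case: (G j.+1 z y) => //=; rewrite encodeK. Qed.

Record invariant j : Prop := {
  inv_nbrs : forall y x, (x \in nbrs (state j y)) = G j y x;
  inv_clock : forall y, clock (state j y) = j;
  inv_ins_round : forall y x, G j y x -> ins_round (state j y) x = last_ins j y x;
  inv_nonadj : forall y x, ~~ G j y x ->
    [/\ outq (state j y) x = [::], sent (state j y) x = set0 & purge (state j y) x = set0];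
  inv_queue : forall y x, G j y x ->
    queue_inv (G j y) (last_ins j y) (last_ins j y x) (outq (state j y) x)
      (nbrs_of (state j x) y) (learnt (state j x) y);
  inv_mirror : forall y x, G j y x -> mirror (state j x) y = sent (state j y) x;
  inv_learnt_le : forall y z w, learnt (state j y) z w <= j;
  inv_sent_src : forall y x p, p \in sent (state j y) x ->
    (p.1 \in nbrs (state j y)) || (p.1 \in purge (state j y) x) }.

Lemma invariant0 : invariant 0.
Proof. by split => /= [y x|//|//|//|y x|y x|//|y x p]; rewrite ?inE ?(negbTE (G0 y x)). Qed.

Section Step.
Variable j : nat.
Hypothesis I : invariant j.

Lemma nbrs_notifiedE y x : (x \in nbrs (notified j y)) = G j.+1 y x.
Proof.
by rewrite nbrs_notified; case: (boolP (toggled j y x)) => // h; rewrite (inv_nbrs I) (untoggled h).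
Qed.

Lemma clock_notifiedE y : clock (notified j y) = j.+1.
Proof. by rewrite clock_notified (inv_clock I). Qed.

Lemma last_update_notified y x w : G j.+1 y x ->
  last_update (outq (notified j y) x) w =
  if toggled j y w then Some (G j.+1 y w)
  else if toggled j y x then None else last_update (outq (state j y) x) w.
Proof.
move=> Gx; rewrite outq_notified nbrs_notifiedE Gx last_update_cat last_update_updates changesE.
by case: (toggled j y w) => //; case: (toggled j y x).
Qed.

(* A toggled link yx restarts with an empty view at x, but then all of y's
   neighbours inserted after yx are toggled too, hence freshly queued. *)
Lemma queue_inv_notified y x : G j.+1 y x ->
  queue_inv (G j.+1 y) (last_ins j.+1 y) (last_ins j.+1 y x) (outq (notified j y) x)
    (nbrs_of (notified j x) y) (learnt (notified j x) y).
Proof.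
move=> Gx w; rewrite nbrs_of_notified learnt_notified [toggled j x y]toggled_sym.
rewrite (last_update_notified w Gx).
case: (boolP (toggled j y w)) => cw; first by split => // b [].
rewrite !last_insS (negbTE cw) andbF (untoggled cw).
case: (boolP (toggled j y x)) => cx.
  split => //; rewrite ?inE // Gx /= => _ h.
  by have := leq_trans h (last_ins_le _ _ _); rewrite ltnn.
have Gx0 : G j y x by rewrite -(untoggled cx).
by rewrite andbF; apply: (inv_queue I Gx0).
Qed.

Lemma queue_inv_stateS y x : G j.+1 y x ->
  queue_inv (G j.+1 y) (last_ins j.+1 y) (last_ins j.+1 y x) (outq (state j.+1 y) x)
    (nbrs_of (state j.+1 x) y) (learnt (state j.+1 x) y).
Proof.
move=> Gx; rewrite outq_stateS nbrs_notifiedE Gx nbrs_of_stateS learnt_stateS.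
rewrite announcement_msg Gx clock_notifiedE.
exact: queue_inv_pop (queue_inv_notified Gx) (last_ins_le _ _).
Qed.

Lemma sent_src_notified y x p : p \in sent (notified j y) x ->
  (p.1 \in nbrs (notified j y)) || (p.1 \in purge (notified j y) x).
Proof.
rewrite sent_notified purge_notified; case: (boolP (toggled j y x)) => cx; first by rewrite inE.
move=> hp; case: (boolP (x \in nbrs (notified j y))) => xN; last first.
  move: xN; rewrite nbrs_notifiedE (untoggled cx) => nG.
  by case: (inv_nonadj I nG) => _ e _; rewrite e inE in hp.
have := inv_sent_src I hp; rewrite (inv_nbrs I) nbrs_notifiedE.
case/orP => [Gp|Pp]; last by rewrite inE Pp orbT.
case: (boolP (toggled j y p.1)) => cp; last by rewrite (untoggled cp) Gp.
rewrite !inE changesE cp; move: cp; rewrite /toggled Gp.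
by case: (G j.+1 y p.1); rewrite ?orbT.
Qed.

Lemma sent_src_stateS y x p : p \in sent (state j.+1 y) x ->
  (p.1 \in nbrs (state j.+1 y)) || (p.1 \in purge (state j.+1 y) x).
Proof.
rewrite sent_stateS purge_stateS nbrs_stateS.
case: ifP => _; last exact: sent_src_notified.
by apply: sent_src_next_op => q; apply: sent_src_notified.
Qed.

Lemma invariantS : invariant j.+1.
Proof.
split.
- by move=> y x; rewrite nbrs_stateS nbrs_notifiedE.
- by move=> y; rewrite clock_stateS clock_notifiedE.
- move=> y x Gx; rewrite ins_round_stateS ins_round_notified last_insS Gx /=.
  case: (boolP (toggled j y x)) => cx; first by rewrite (inv_clock I).
  by apply: (inv_ins_round I); rewrite -(untoggled cx).
- move=> y x nGx; rewrite outq_stateS sent_stateS purge_stateS !nbrs_notifiedE (negbTE nGx).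
  rewrite outq_notified sent_notified purge_notified nbrs_notifiedE (negbTE nGx) cats0.
  case: (boolP (toggled j y x)) => // cx.
  by apply: (inv_nonadj I); rewrite -(untoggled cx).
- exact: queue_inv_stateS.
- move=> y x Gx; rewrite mirror_stateS sent_stateS op_of_msg Gx nbrs_notifiedE Gx.
  rewrite mirror_notified sent_notified [toggled j x y]toggled_sym.
  case: (boolP (toggled j y x)) => // cx; congr apply_op.
  by apply: (inv_mirror I); rewrite -(untoggled cx).
- move=> y z w; rewrite learnt_stateS clock_notifiedE learnt_notified /time_upd.
  have learnt_le : (if toggled j y z then fun _ => 0 else learnt (state j y) z) w <= j.+1.
    by case: (toggled j y z) => //; apply: leqW; apply: (inv_learnt_le I).
  by case: (announcement _ _) => [[w0 _]|] //; case: (w == w0).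
- exact: sent_src_stateS.
Qed.

End Step.

Lemma run_invariant j : invariant j.
Proof. by elim: j => [|j IH]; [apply: invariant0 | apply: invariantS]. Qed.

Section Listing.
Variable J : nat.
Let I := run_invariant J.

Definition consistent (y : V) : bool := ~~ inconsistent (state J y).

Lemma consistent_link y x : consistent y -> G J y x ->
  [/\ outq (state J y) x = [::], purge (state J y) x = set0 &
      due (state J y) x = sent (state J y) x].
Proof.
rewrite /consistent /inconsistent negb_or => /andP [_ /existsPn /(_ x)].
rewrite (inv_nbrs I) => + Gx; rewrite Gx /= !negb_or.
by case/and3P => /negPn/eqP ? /negPn/eqP ? /negPn/eqP.
Qed.

Lemma mirror_newest x y z w : consistent y -> consistent z -> G J x y -> G J y z -> G J z w ->
  last_ins J z y <= last_ins J z w -> last_ins J y x <= last_ins J z w ->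
  (z, w) \in mirror (state J x) y.
Proof.
move=> oy oz Gxy Gyz Gzw newer_yz newer_xy.
have Gyx : G J y x by rewrite G_sym.
have Gzy : G J z y by rewrite G_sym.
have [_ _ due_sent] := consistent_link oy Gyx.
have [outq0 _ _] := consistent_link oz Gzy.
have [_ _ complete] := inv_queue I Gzy w.
have /andP [wR learnt_late] :
    (w \in nbrs_of (state J y) z) && (last_ins J z w <= learnt (state J y) z w).
  by apply: complete; rewrite ?outq0.
rewrite (inv_mirror I Gyx) -due_sent in_due (inv_nbrs I) // Gyz wR /=.
by rewrite (inv_ins_round I Gyx) (leq_trans newer_xy learnt_late).
Qed.

Lemma cert_sound v H p q : {in H, forall u, consistent u} -> cert v (state J v) H p q -> G J p q.
Proof.
move=> ok; rewrite /cert !(inv_nbrs I).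
case/orP => [/orP [/andP [/eqP -> //] | /andP [/eqP -> h]]|]; first by rewrite G_sym.
case/existsP => y /existsP [z /existsP [w /and5P [yN yH zH zw he]]].
rewrite (inv_nbrs I) in yN.
have Gyv : G J y v by rewrite G_sym.
have Gzy (Gyz : G J y z) : G J z y by rewrite G_sym.
have [_ _ due_sent] := consistent_link (ok y yH) Gyv.
move: zw; rewrite (inv_mirror I Gyv) -due_sent in_due (inv_nbrs I) // => /and3P [/= Gyz wR _].
have [outq0 _ _] := consistent_link (ok z zH) (Gzy Gyz).
have [_ sound _] := inv_queue I (Gzy Gyz) w.
have Gzw : G J z w by apply: sound wR; rewrite outq0.
by case/orP: he => /orP [] /andP [/eqP -> /eqP ->] //; rewrite G_sym.
Qed.

Lemma certified4 a b c d (H := [:: a; b; c; d]) : all consistent H -> cycle (G J) H ->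
  cycle (fun p q => last_ins J p q <= last_ins J a b) H -> cycle (cert c (state J c) H) H.
Proof.
case/and5P => oa _ _ od _ /and5P [Gab Gbc Gcd Gda _] /and5P [_ _ new_cd new_da _].
have ab_at_c : (a, b) \in mirror (state J c) d.
  by apply: mirror_newest; rewrite // last_ins_sym.
have [cN dN] : b \in nbrs (state J c) /\ d \in nbrs (state J c).
  by rewrite !(inv_nbrs I) Gcd G_sym.
have [aH dH] : a \in H /\ d \in H by rewrite !inE !eqxx !orbT.
rewrite /= andbT; apply/and4P; split.
- by apply: cert_mirror dN dH aH ab_at_c _; rewrite same_edge_refl orbT.
- by apply: (cert_link _ cN) (same_edge_swap _ _).
- by apply: (cert_link _ dN) (same_edge_refl _ _).
- by apply: cert_mirror dN dH aH ab_at_c _; rewrite same_edge_refl.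
Qed.

Lemma certified5 a b c d e (H := [:: a; b; c; d; e]) : all consistent H -> cycle (G J) H ->
  cycle (fun p q => last_ins J p q <= last_ins J a b) H -> cycle (cert d (state J d) H) H.
Proof.
case/and5P => oa ob oc _ /andP [oe _].
case/and5P => Gab Gbc Gcd Gde /andP [Gea _].
case/and5P => _ new_bc new_cd new_de /andP [new_ea _].
have ab_at_d : (a, b) \in mirror (state J d) e.
  by apply: mirror_newest; rewrite // last_ins_sym.
have ba_at_d : (b, a) \in mirror (state J d) c.
  by apply: mirror_newest; rewrite 1?G_sym // [last_ins J b a]last_ins_sym // last_ins_sym.
have [cN eN] : c \in nbrs (state J d) /\ e \in nbrs (state J d).
  by rewrite !(inv_nbrs I) Gde G_sym.
have [aH bH cH eH] : [/\ a \in H, b \in H, c \in H & e \in H] by rewrite !inE !eqxx !orbT.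
rewrite /= andbT; apply/and5P; split.
- by apply: cert_mirror eN eH aH ab_at_d _; rewrite same_edge_refl orbT.
- by apply: cert_mirror cN cH bH ba_at_d _; rewrite same_edge_swap.
- by apply: (cert_link _ cN) (same_edge_swap _ _).
- by apply: (cert_link _ eN) (same_edge_refl _ _).
- by apply: cert_mirror eN eH aH ab_at_d _; rewrite same_edge_refl.
Qed.

Lemma cycle_certified H : (size H == 4) || (size H == 5) -> uniq H ->
  all consistent H -> cycle (G J) H -> exists2 v, v \in H & cycle (cert v (state J v) H) H.
Proof.
move=> sH uH ok cH.
have [|i [a [b [s [rotE newest]]]]] := rot_to_max_edge (last_ins J) uH.
  by case/orP: sH => /eqP ->.
have certE v : cycle (cert v (state J v) H) H = cycle (cert v (state J v) (rot i H)) (rot i H).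
  by rewrite rot_cycle; apply: eq_cycle; apply: cert_eq_mem => u; rewrite mem_rot.
have vH v : v \in rot i H -> v \in H by rewrite mem_rot.
rewrite -(rot_cycle i) rotE in cH; rewrite -(rot_cycle i) rotE in newest.
rewrite -(eq_all_r (mem_rot i H)) rotE in ok.
move: sH vH certE; rewrite -(size_rot i) rotE.
case: s {rotE} ok cH newest => [|c [|d [|e [|? ?]]]] // ok cH newest _ vH certE.
- exists c; first by apply: vH; rewrite !inE eqxx !orbT.
  by rewrite certE; apply: certified4.
- exists d; first by apply: vH; rewrite !inE eqxx !orbT.
  by rewrite certE; apply: certified5.
Qed.

End Listing.

Lemma consistent_static i u x : consistent i.+1 u -> G i.+1 u x = G i u x.
Proof.
rewrite /consistent /inconsistent changed_stateS changed_notified negb_or.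
by case/andP => /existsPn /(_ x) /untoggled.
Qed.

Lemma resp_query i v H : resp Alg G i v H = query v (state i v) H.
Proof. by []. Qed.

Lemma query_correct i H : (size H == 4) || (size H == 5) -> uniq H ->
    (exists2 v, v \in H & is_incons (resp Alg G i.+1 v H)) \/
    ((exists2 v, v \in H & is_yes (resp Alg G i.+1 v H)) <-> is_kcycle (size H) (G i) H).
Proof.
move=> sH uH.
have [ok|/allPn [v vH /negPn incv]] := boolP (all (consistent i.+1) H); last first.
  by left; exists v; rewrite // resp_query /query incv.
right; have okH : {in H, forall u, consistent i.+1 u} by apply/allP.
rewrite /is_kcycle.
have <- : cycle (G i.+1) H = cycle (G i) H.
  by apply: eq_in_cycle ok => u x ou _; apply: consistent_static.
split.
- case=> v vH; rewrite resp_query /query (negbTE (okH v vH)).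
  case: ifP => // cv _; split => //.
  by apply: sub_cycle cv => p q; apply: cert_sound.
- case=> _ _ cH; have [v vH cv] := cycle_certified sH uH ok cH.
  by exists v; rewrite // resp_query /query (negbTE (okH v vH)) cv.
Qed.

Section Amortization.
Hypothesis G_irr : forall i v, ~~ G i v v.

Definition ntoggled j (y : V) := #|[set u | toggled j y u]|.

Lemma toggled_irr j v : toggled j v v = false.
Proof. by rewrite /toggled (negbTE (G_irr _ _)) (negbTE (G_irr _ _)). Qed.

Lemma sum_ntoggled j : \sum_z ntoggled j z <= 2 * nchanges G j.+1.
Proof.
rewrite /ntoggled sum_card_rel /nchanges /=.
set A := [set p : V * V | (p.1 < p.2) && _].
have sub : [set p : V * V | toggled j p.1 p.2] \subset A :|: [set (p.2, p.1) | p in A].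
  apply/subsetP => -[a b]; rewrite inE /= => tab.
  case: (ltngtP a b) => hab.
  - by rewrite inE; apply/orP; left; rewrite inE /= hab.
  - rewrite inE; apply/orP; right; apply/imsetP; exists (b, a) => //.
    by rewrite inE /= hab -/(toggled j b a) toggled_sym.
  - by move/val_inj: hab tab => ->; rewrite toggled_irr.
apply: (leq_trans (subset_leq_card sub)); apply: (leq_trans (leq_card_setU _ _)).
by rewrite mul2n -addnn leq_add2l leq_imset_card.
Qed.

Lemma ntoggled_le j y : ntoggled j y <= 2 * nchanges G j.+1.
Proof. by apply: leq_trans (sum_ntoggled j); rewrite (bigD1 y) //= leq_addr. Qed.

Lemma size_updates j y : size (updates (changes G j.+1 y)) = ntoggled j y.
Proof.
rewrite /updates size_pmap -sum1_count big_enum_cond /= sum1_card /ntoggled.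
by apply: eq_card => u; rewrite [in RHS]inE -changes_toggled unfold_in /=; case: (changes _ _ _ _).
Qed.

Definition qlen j y x := size (outq (state j y) x).
Definition inflow j y := \sum_z qlen j z y.

(* Each announcement received by y moves at most one 2-path in or out of a
   [due] set of y, and the same announcement shortens an incoming queue: the
   factor 2 makes the incoming queues pay for the forwarding debt they
   create. *)
Definition pot j y x := qlen j y x + fwd_debt (state j y) x + 2 * inflow j y.
Definition potential j := \max_(p : V * V) pot j p.1 p.2.
Definition senders j y := [set z | announcement n (msg j z y) != None].

Section Round.
Variable j : nat.
Let I := run_invariant j.

Lemma notified_nonadj y x : ~~ G j.+1 y x ->
  [/\ outq (notified j y) x = [::], sent (notified j y) x = set0 & purge (notified j y) x = set0].
Proof.
move=> nGx; rewrite outq_notified sent_notified purge_notified (nbrs_notifiedE I) (negbTE nGx).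
case: (boolP (toggled j y x)) => // cx; rewrite cats0.
by apply: (inv_nonadj I); rewrite -(untoggled cx).
Qed.

Lemma announcement_msg_some z y :
  (announcement n (msg j z y) != None) = (0 < size (outq (notified j z) y)).
Proof.
rewrite announcement_msg; case: (boolP (G j.+1 z y)) => [_|/notified_nonadj [-> _ _] //].
by case: (outq (notified j z) y).
Qed.

Lemma qlenS y x :
  qlen j.+1 y x + (0 < size (outq (notified j y) x)) = size (outq (notified j y) x).
Proof.
rewrite /qlen outq_stateS (nbrs_notifiedE I).
case: (boolP (G j.+1 y x)) => [_|/notified_nonadj [-> _ _] //].
by case: (outq (notified j y) x) => //= a l; rewrite addn1.
Qed.

Lemma inflowS y : inflow j.+1 y + #|senders j y| = \sum_z size (outq (notified j z) y).
Proof.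
rewrite /inflow /senders card_set_sum -big_split; apply: eq_bigr => z _.
by rewrite /= announcement_msg_some qlenS.
Qed.

Lemma size_outq_notified y x : size (outq (notified j y) x) <= qlen j y x + ntoggled j y.
Proof.
rewrite outq_notified size_cat /qlen; apply: leq_add; first by case: (toggled j y x).
by case: (x \in nbrs (notified j y)); rewrite ?size_updates.
Qed.

Lemma due_stateS_diff y x :
  #|due (state j.+1 y) x :\: due (notified j y) x| +
  #|due (notified j y) x :\: due (state j.+1 y) x| <= #|senders j y|.
Proof.
set D1 := due _ x; set D2 := due _ x.
pose wof z := if announcement n (msg j z y) is Some (w, _) then w else z.
have sub : (D1 :\: D2) :|: (D2 :\: D1) \subset [set (z, wof z) | z in senders j y].
  apply/subsetP => -[z w] hp.
  have [b ann] : exists b, announcement n (msg j z y) = Some (w, b).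
    apply: (@due_recv _ (notified j y) (fun z => msg j z y) x).
    by move: hp; rewrite !inE; case: ((z, w) \in D1); case: ((z, w) \in D2).
  by apply/imsetP; exists z; rewrite ?inE /wof ann.
have := cardsUI (D1 :\: D2) (D2 :\: D1).
have -> : (D1 :\: D2) :&: (D2 :\: D1) = set0.
  by apply/setP => p; rewrite !inE; case: (p \in D1); case: (p \in D2).
rewrite cards0 addn0 => <-.
exact: leq_trans (subset_leq_card sub) (leq_imset_card _ _).
Qed.

Lemma fwd_debtS y x :
  fwd_debt (state j.+1 y) x + (0 < fwd_debt (notified j y) x) <=
  fwd_debt (notified j y) x + #|senders j y|.
Proof.
case: (boolP (G j.+1 y x)) => Gx; last first.
  have [_ eT eP] := notified_nonadj Gx.
  have xS : x \notin nbrs (state j.+1 y) by rewrite nbrs_stateS (nbrs_notifiedE I).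
  have xN : x \notin nbrs (notified j y) by rewrite (nbrs_notifiedE I).
  rewrite /fwd_debt purge_stateS sent_stateS !(ifN _ _ xN) eT eP /due (ifN _ _ xS).
  by rewrite (ifN _ _ xN) debt0 cards0.
have xN : x \in nbrs (notified j y) by rewrite (nbrs_notifiedE I).
rewrite {1}/fwd_debt purge_stateS sent_stateS xN.
apply: leq_trans (leq_add (debt_due _ _ _ (due (notified j y) x)) (leqnn _)) _.
have := debt_next_op (notified j y) x; have := due_stateS_diff y x; lia.
Qed.

Lemma due_notified y x : ~~ toggled j y x -> G j y x ->
  due (notified j y) x = [set p in due (state j y) x | p.1 \notin [set u | toggled j y u]].
Proof.
move=> cx Gx; have xS : x \in nbrs (state j y) by rewrite (inv_nbrs I).
have xN : x \in nbrs (notified j y) by rewrite (nbrs_notifiedE I) (untoggled cx).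
apply/setP => p; rewrite !inE (in_due _ xN) (in_due _ xS) nbrs_notified nbrs_of_notified.
rewrite learnt_notified ins_round_notified (negbTE cx).
by case: (toggled j y p.1); rewrite ?inE ?andbF ?andbT.
Qed.

Lemma fwd_debt_notified y x : fwd_debt (notified j y) x <= fwd_debt (state j y) x + ntoggled j y.
Proof.
rewrite /fwd_debt purge_notified sent_notified.
have [cx|cx] := boolP (toggled j y x).
  have -> : due (notified j y) x = set0.
    rewrite /due; case: ifP => // _; apply/setP => p.
    rewrite !inE ins_round_notified cx learnt_notified (inv_clock I).
    case: (toggled j y p.1); rewrite ?andbF //.
    by rewrite ltnNge (inv_learnt_le I) !andbF.
  by rewrite debt0 cards0.
have [Gx|nGx] := boolP (G j y x); last first.
  have xN : x \notin nbrs (notified j y) by rewrite (nbrs_notifiedE I) (untoggled cx).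
  by case: (inv_nonadj I nGx) => _ -> ->; rewrite (negbTE xN) /due (negbTE xN) debt0 cards0.
rewrite (nbrs_notifiedE I) (untoggled cx) Gx (due_notified cx Gx).
apply: debt_restrict => [|p]; first by apply/subsetP => u; rewrite !inE changesE; case: toggled.
rewrite (in_due _ _) ?(inv_nbrs I) // => /and3P [Gp _ _]; rewrite !inE changesE => tp.
by rewrite tp; move: tp; rewrite /toggled Gp; case: (G j.+1 y p.1).
Qed.

Lemma potS_notified y x :
  pot j.+1 y x + (0 < size (outq (notified j y) x)) + (0 < fwd_debt (notified j y) x) +
    #|senders j y| <=
  size (outq (notified j y) x) + fwd_debt (notified j y) x +
    2 * \sum_z size (outq (notified j z) y).
Proof.
rewrite /pot; have := qlenS y x; have := fwd_debtS y x; have := inflowS y; lia.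
Qed.

Lemma inflow_notified y :
  \sum_z size (outq (notified j z) y) <= inflow j y + \sum_z ntoggled j z.
Proof. by rewrite /inflow -big_split; apply: leq_sum => z _; apply: size_outq_notified. Qed.

Lemma pot_change y x : pot j.+1 y x <= pot j y x + 8 * nchanges G j.+1.
Proof.
have := potS_notified y x; have := size_outq_notified y x; have := fwd_debt_notified y x.
have := inflow_notified y; have := sum_ntoggled j; have := ntoggled_le j y; rewrite /pot; lia.
Qed.

Lemma static_untoggled : nchanges G j.+1 = 0 -> forall y u, ~~ toggled j y u.
Proof.
move=> d0 y u; have := ntoggled_le j y; rewrite d0 muln0 leqn0 cards_eq0.
by move=> /eqP/setP/(_ u); rewrite !inE => ->.
Qed.

Section Static.
Hypothesis static : nchanges G j.+1 = 0.

Lemma outq_notified_static y x : outq (notified j y) x = outq (state j y) x.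
Proof.
have nc := static_untoggled static y.
have : size (updates (changes G j.+1 y)) = 0.
  rewrite size_updates; apply/eqP; rewrite cards_eq0; apply/eqP/setP => u.
  by rewrite !inE (negbTE (nc u)).
by rewrite outq_notified (negbTE (nc x)) => /size0nil ->; rewrite if_same cats0.
Qed.

Lemma fwd_debt_notified_static y x : fwd_debt (notified j y) x = fwd_debt (state j y) x.
Proof.
have nc := static_untoggled static y.
have nbrsE : nbrs (notified j y) = nbrs (state j y).
  by apply/setP => u; rewrite nbrs_notified (negbTE (nc u)).
rewrite /fwd_debt purge_notified sent_notified (negbTE (nc x)).
have -> : due (notified j y) x = due (state j y) x.
  rewrite /due nbrsE; case: ifP => // _; apply/setP => p.
  by rewrite !inE nbrs_of_notified learnt_notified ins_round_notified !(negbTE (nc _)).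
have -> : [set u | changes G j.+1 y u == Some false] = set0.
  by apply/setP => u; rewrite !inE changesE (negbTE (nc u)).
by rewrite setU0 if_same.
Qed.

Lemma pot_static y x : pot j.+1 y x + (0 < pot j y x) <= pot j y x.
Proof.
have inflowE : \sum_z size (outq (notified j z) y) = inflow j y.
  by apply: eq_bigr => z _; rewrite outq_notified_static.
have senders_pos : (0 < inflow j y) <= #|senders j y|.
  have [//|pos] := posnP (inflow j y).
  rewrite card_gt0; apply/set0Pn; move: pos; rewrite lt0n sum_nat_eq0.
  case/forallPn => z /= qz; exists z.
  by rewrite inE announcement_msg_some outq_notified_static lt0n.
have := potS_notified y x; rewrite inflowE fwd_debt_notified_static outq_notified_static.
by rewrite /pot /qlen; lia.
Qed.

End Static.

Lemma potential_change : potential j.+1 <= potential j + 8 * nchanges G j.+1.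
Proof.
apply/bigmax_leqP => p _; apply: leq_trans (pot_change p.1 p.2) _.
by rewrite leq_add2r (leq_bigmax (F := fun p : V * V => pot j p.1 p.2) p).
Qed.

Lemma potential_static : nchanges G j.+1 = 0 -> potential j.+1 + (0 < potential j) <= potential j.
Proof.
move=> static.
suff : potential j.+1 <= potential j - (0 < potential j) by lia.
apply/bigmax_leqP => -[y x] _ /=.
have := pot_static static y x.
have : pot j y x <= potential j := leq_bigmax (F := fun p : V * V => pot j p.1 p.2) (y, x).
lia.
Qed.

End Round.

Lemma potential0 : potential 0 = 0.
Proof.
apply/eqP; rewrite -leqn0; apply/bigmax_leqP => p _.
by rewrite /pot /qlen /inflow /fwd_debt /= big1 // /due /= inE debt0 cards0.
Qed.

Lemma inconsistent_round k j : round_inconsistent Alg k G j.+1 ->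
  (0 < nchanges G j.+1) || (0 < potential j.+1).
Proof.
case/existsP => v /existsP [H /andP [_]]; rewrite resp_query /query.
case: ifP => [incv _|]; last by case: ifP.
move: incv; rewrite /inconsistent changed_stateS changed_notified.
case/orP => [/existsP [u tu]|/existsP [x /andP [_ pending]]].
  apply/orP; left; have := ntoggled_le j v.
  have : 0 < ntoggled j v by apply/card_gt0P; exists u; rewrite inE.
  lia.
apply/orP; right.
apply: leq_trans _ (leq_bigmax (F := fun p : V * V => pot j.+1 p.1 p.2) (v, x)).
rewrite /pot /qlen /=; case/orP: pending => [nq|/fwd_debt_gt0]; last lia.
by rewrite -!addnA ltn_addr // lt0n size_eq0.
Qed.

Lemma amortized_bound k i :
  \sum_(1 <= j < i.+1) round_inconsistent Alg k G j + potential i <=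
  9 * \sum_(1 <= j < i.+1) nchanges G j.
Proof.
elim: i => [|i IH]; first by rewrite !big_geq // potential0.
rewrite big_nat_recr //= [X in _ <= 9 * X]big_nat_recr //=.
have := @inconsistent_round k i.
have [static|some_change] := posnP (nchanges G i.+1).
  have := potential_static static; rewrite static.
  by case: (round_inconsistent Alg k G i.+1) => /= decrease; [move/(_ isT) | move=> _]; lia.
by have := potential_change i; case: (round_inconsistent Alg k G i.+1) => /=; lia.
Qed.

End Amortization.
End Run.

Lemma listing_correct_Alg k : (k == 4) || (k == 5) -> listing_correct k Alg.
Proof.
move=> k45 n G [G_sym [_ G0]] i H sH uH; rewrite -sH.
by apply: query_correct; rewrite ?sH.
Qed.

Lemma amortized_Alg k : amortized_le Alg k 9.
Proof.
move=> n G [G_sym [G_irr G0]] i.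
by have := amortized_bound G_sym G0 G_irr k i; lia.
Qed.

Theorem theorem4 : kcycle_listing_O1 4 /\ kcycle_listing_O1 5.
Proof.
by split; exists Alg; (split; [ exact: small_messages_Alg | exact: listing_correct_Alg
                               | exists 9; exact: amortized_Alg ]).
Qed.
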